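(* Consider the caching network and the backhaul-eavesdropper scenario $S_1$ described in the context, and assume every user is served by exactly one SBS, i.e., $\gamma_1=1$. For a placement $\mathbf{m}=(m_1,\dots,m_N)$ of integers $0\le m_j\le n$, if $m_j > n\left(1-\frac{1}{Q p_j}\right)$ for every $j=1,\dots,N$, then the network is secure in scenario $S_1$.
   Context: A macro base station (MBS) has access to a library of $N$ files $F_1,\dots,F_N$; file $F_j$ is requested with probability $p_j>0$, $\sum_j p_j=1$. There are $N_{\text{SBS}}$ small-cell base stations (SBSs), each with a cache. Each file is split into $n$ fragments and encoded with a code such that any $n$ distinct encoded packets of a file suffice to recover it, while fewer than $n$ distinct packets do not allow recovery of the file. A placement $\mathbf{m}$ means each SBS stores $m_j$ encoded packets of $F_j$, with packets stored at different SBSs all distinct. A user is served by exactly $d$ SBSs with probability $\gamma_d$, $d=1,\dots,S$ ($\gamma_d\ge0$, $\sum_d\gamma_d=1$, $S$ the maximum number of SBSs serving a user). A user requesting $F_j$ and served by $d$ SBSs receives $d m_j$ distinct packets from them, and the MBS sends the missing $n(1-\min(1,d m_j/n))$ new distinct packets over the backhaul. Scenario $S_1$: each SBS receives $Q$ requests during delivery, $Q p_j$ of them for $F_j$; an eavesdropper intercepts all packets sent over one MBS-to-SBS link, collecting $P_j=\sum_{d=1}^{S} Q\gamma_d p_j\, n(1-\min(1,d m_j/n))$ distinct packets of $F_j$. The network is secure in scenario $S_1$ if $P_j<n$ for all $j$. *)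

From Stdlib Require Import Reals Lra Lia.
Open Scope R_scope.

(* Number of packets the MBS sends over the backhaul for a user requesting a
   file with m stored packets per SBS, served by d SBSs, code length n:
   n (1 - min(1, d m / n)). *)
Definition backhaul_packets (n : nat) (d : nat) (mj : nat) : R :=
  INR n * (1 - Rmin 1 (INR d * INR mj / INR n)).

Definition P_S1 (n S : nat) (Q : R) (gamma : nat -> R) (p : nat -> R)
    (m : nat -> nat) (j : nat) : R :=
  sum_f 1 S (fun d => Q * gamma d * p j * backhaul_packets n d (m j)).

Definition secure_S1 (N n S : nat) (Q : R) (gamma : nat -> R)
    (p : nat -> R) (m : nat -> nat) : Prop :=
  forall j : nat, (1 <= j <= N)%nat -> P_S1 n S Q gamma p m j < INR n.

(* Each user gets at least one SBS, and with [m_j <= n] a single SBS already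
   leaves at most [n - m_j] packets for the backhaul; so whatever the
   distribution gamma, [P_j <= Q p_j (n - m_j)], and the hypothesis on [m_j]
   is exactly [Q p_j (n - m_j) < n]. *)
From Stdlib Require Import Reals Lra Lia.
Open Scope R_scope.

Lemma sum_f_le (lo hi : nat) (f g : nat -> R) :
  (lo <= hi)%nat -> (forall k, (lo <= k <= hi)%nat -> f k <= g k) ->
  sum_f lo hi f <= sum_f lo hi g.
Proof.
  intros Hlohi Hfg; unfold sum_f.
  apply sum_Rle; intros k Hk; apply Hfg; lia.
Qed.

Lemma sum_f_mulr (lo hi : nat) (f : nat -> R) (c : R) :
  sum_f lo hi (fun k => f k * c) = sum_f lo hi f * c.
Proof.
  unfold sum_f; rewrite <- scal_sum; ring.
Qed.

Lemma backhaul_packets_le_gap (n d mj : nat) :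
  (1 <= n)%nat -> (1 <= d)%nat -> (mj <= n)%nat ->
  backhaul_packets n d mj <= INR n - INR mj.
Proof.
  intros Hn Hd Hmj; unfold backhaul_packets.
  assert (Hn_pos : 0 < INR n) by (apply lt_0_INR; lia).
  assert (Hd1 : 1 <= INR d) by (apply (le_INR 1); lia).
  assert (Hm_le : INR mj <= INR n) by (apply le_INR; lia).
  assert (Hm0 : 0 <= INR mj) by apply pos_INR.
  apply Rmin_case_strong; intros _.
  - lra.
  - replace (INR n * (1 - INR d * INR mj / INR n)) with (INR n - INR d * INR mj)
      by (field; lra).
    nra.
Qed.

Lemma P_S1_le_gap (n S : nat) (Q : R) (gamma p : nat -> R) (m : nat -> nat) (j : nat) :
  (1 <= n)%nat -> (1 <= S)%nat -> 0 <= Q * p j -> (m j <= n)%nat ->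
  (forall d, (1 <= d <= S)%nat -> 0 <= gamma d) -> sum_f 1 S gamma = 1 ->
  P_S1 n S Q gamma p m j <= Q * p j * (INR n - INR (m j)).
Proof.
  intros Hn HS HQp Hmj Hgamma_nonneg Hgamma_sum; unfold P_S1.
  rewrite <- (Rmult_1_l (Q * p j * _)), <- Hgamma_sum, <- sum_f_mulr.
  apply sum_f_le; [exact HS |]; intros d Hd.
  pose proof (Hgamma_nonneg d Hd).
  pose proof (backhaul_packets_le_gap n d (m j) Hn (proj1 Hd) Hmj).
  replace (gamma d * (Q * p j * (INR n - INR (m j))))
    with (gamma d * (Q * p j) * (INR n - INR (m j))) by ring.
  replace (Q * gamma d * p j) with (gamma d * (Q * p j)) by ring.
  apply Rmult_le_compat_l; [apply Rmult_le_pos |]; assumption.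
Qed.

Lemma gap_bound_lt (n q mj : R) :
  0 < q -> mj > n * (1 - 1 / q) -> q * (n - mj) < n.
Proof.
  intros Hq Hmj.
  replace (n * (1 - 1 / q)) with (n - n / q) in Hmj by (field; lra).
  assert (Hlt : n - mj < n / q) by lra.
  apply (Rmult_lt_compat_l q) in Hlt; [| exact Hq].
  replace (q * (n / q)) with n in Hlt by (field; lra).
  exact Hlt.
Qed.

Theorem corollary1
  (N n S : nat) (Q : R) (p : nat -> R) (gamma : nat -> R) (m : nat -> nat)
  (hN : (1 <= N)%nat) (hn : (1 <= n)%nat) (hS : (1 <= S)%nat) (hQ : 0 < Q)
  (hp_pos : forall j, (1 <= j <= N)%nat -> 0 < p j)
  (hp_sum : sum_f 1 N p = 1)
  (hgamma_nonneg : forall d, (1 <= d <= S)%nat -> 0 <= gamma d)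
  (hgamma_sum : sum_f 1 S gamma = 1)
  (hgamma1 : gamma 1%nat = 1)
  (hm_le : forall j, (1 <= j <= N)%nat -> (m j <= n)%nat)
  (hm : forall j, (1 <= j <= N)%nat -> INR (m j) > INR n * (1 - 1 / (Q * p j))) :
  secure_S1 N n S Q gamma p m.
Proof.
  intros j Hj.
  assert (HQp : 0 < Q * p j) by (apply Rmult_lt_0_compat; [exact hQ | exact (hp_pos j Hj)]).
  eapply Rle_lt_trans.
  - exact (P_S1_le_gap n S Q gamma p m j hn hS (Rlt_le _ _ HQp) (hm_le j Hj)
             hgamma_nonneg hgamma_sum).
  - exact (gap_bound_lt _ _ _ HQp (hm j Hj)).
Qed.
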